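(* A Hausdorff space $(X,\mathcal T)$ is very I-favorable if and only if the family $\{\mathcal P\in[\mathcal T]^{\le\omega}:\mathcal P\subset_!\mathcal T\}$ contains a club $\mathcal C$ with the following properties: (i) every $A\in\mathcal C$ covers $X$ and is closed under finite intersections; (ii) for any two distinct points $x,y\in X$ there exist $A\in\mathcal C$ and disjoint $U_x,U_y\in A$ with $x\in U_x$ and $y\in U_y$; (iii) $\bigcup\mathcal C=\mathcal T$.
   Context: For a family $\mathcal P$ of open subsets of $X$ contained in a family $\mathcal Q$ of open subsets of $X$, write $\mathcal P\subset_!\mathcal Q$ if for every subfamily $\mathcal S\subset\mathcal P$ and every point $x\notin\operatorname{cl}_X\bigcup\mathcal S$ there exists $W\in\mathcal P$ with $x\in W$ and $W\cap\bigcup\mathcal S=\emptyset$. $[\mathcal Q]^{\le\omega}$ denotes the set of all countable subfamilies of $\mathcal Q$. A family $\mathcal C\subset[\mathcal Q]^{\le\omega}$ is a club if (i) for every increasing sequence $C_1\subset C_2\subset\cdots$ of members of $\mathcal C$, $\bigcup_nC_n\in\mathcal C$, and (ii) every $B\in[\mathcal Q]^{\le\omega}$ is contained in some $C\in\mathcal C$. A space $X$ with topology $\mathcal T_X$ is very I-favorable if the family $\{\mathcal P\in[\mathcal T_X]^{\le\omega}:\mathcal P\subset_!\mathcal T_X\}$ contains a club. *)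

From Stdlib Require Import Classical.

Definition set (X : Type) := X -> Prop.
Definition family (X : Type) := set X -> Prop.

Definition is_topology {X : Type} (T : family X) : Prop :=
  T (fun _ => True) /\ T (fun _ => False) /\
  (forall U V, T U -> T V -> T (fun x => U x /\ V x)) /\
  (forall F : family X, (forall U, F U -> T U) -> T (fun x => exists U, F U /\ U x)).

Definition hausdorff {X : Type} (T : family X) : Prop :=
  forall x y : X, x <> y ->
    exists U V, T U /\ T V /\ U x /\ V y /\ (forall z, U z -> V z -> False).

Definition subfam {X : Type} (P Q : family X) : Prop := forall U, P U -> Q U.

Definition Union {X : Type} (S : family X) : set X := fun x => exists U, S U /\ U x.

Definition closure {X : Type} (T : family X) (A : set X) : set X :=
  fun x => forall U, T U -> U x -> exists y, U y /\ A y.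

Definition countable_fam {X : Type} (P : family X) : Prop :=
  (forall U, ~ P U) \/
  exists f : nat -> set X, (forall n, P (f n)) /\ (forall U, P U -> exists n, f n = U).

Definition ctbl_sub {X : Type} (Q P : family X) : Prop := subfam P Q /\ countable_fam P.

(* P subset_! Q, where T is the topology of X (used for the closure) *)
Definition subset_bang {X : Type} (T : family X) (P Q : family X) : Prop :=
  subfam P Q /\
  forall S : family X, subfam S P ->
    forall x, ~ closure T (Union S) x ->
      exists W, P W /\ W x /\ (forall z, W z -> Union S z -> False).

Definition club {X : Type} (Q : family X) (C : family X -> Prop) : Prop :=
  (forall A, C A -> ctbl_sub Q A) /\
  (forall Cs : nat -> family X,
      (forall n, C (Cs n)) -> (forall n, subfam (Cs n) (Cs (S n))) ->
      C (fun U => exists n, Cs n U)) /\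
  (forall B, ctbl_sub Q B -> exists A, C A /\ subfam B A).

Definition club_in_bang {X : Type} (T : family X) (C : family X -> Prop) : Prop :=
  club T C /\ forall P, C P -> subset_bang T P T.

Definition very_I_favorable {X : Type} (T : family X) : Prop :=
  exists C, club_in_bang T C.

(* Shrink a club of countable families P with P ⊂_! T to the members that contain
   X and are closed under finite intersections.  These still form a club: any
   countable B ⊂ T lies in the union of a chain A_0 ⊆ A_1 ⊆ ... in the club, where
   A_0 ⊇ B ∪ {X} and A_(n+1) contains all intersections of two members of A_n.
   Cofinality applied to {U} and to a Hausdorff-separating pair {U, V} then gives
   (iii) and (ii); the converse is trivial. *)
From Stdlib Require Import ClassicalEpsilon FunctionalExtensionality
  PropExtensionality Cantor Lia.

Definition full {X : Type} : set X := fun _ => True.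

Definition inter {X : Type} (U V : set X) : set X := fun x => U x /\ V x.

Definition fam0 {X : Type} : family X := fun _ => False.

Definition fam_add {X : Type} (P : family X) (U : set X) : family X :=
  fun W => P W \/ W = U.

Definition pairwise_inters {X : Type} (A : family X) : family X :=
  fun W => exists U V, A U /\ A V /\ W = inter U V.

Lemma inter_id {X : Type} (U : set X) : inter U U = U.
Proof.
  apply functional_extensionality; intro x; apply propositional_extensionality.
  unfold inter; tauto.
Qed.

Lemma subfam_pairwise_inters {X : Type} (A : family X) :
  subfam A (pairwise_inters A).
Proof. intros U HU; exists U, U; rewrite inter_id; auto. Qed.

Lemma countable_fam_add {X : Type} (P : family X) (U : set X) :
  countable_fam P -> countable_fam (fam_add P U).
Proof.
  intros HP; right.
  destruct HP as [Hempty | [f [Hf Hsurj]]].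
  - exists (fun _ => U); split; [right; reflexivity|].
    intros W [HW | ->]; [exfalso; exact (Hempty W HW) | exists 0; reflexivity].
  - exists (fun n => match n with 0 => U | S k => f k end); split.
    + intros [|k]; [right; reflexivity | left; apply Hf].
    + intros W [HW | ->].
      * destruct (Hsurj W HW) as [k <-]; exists (S k); reflexivity.
      * exists 0; reflexivity.
Qed.

Lemma countable_fam_pairwise_inters {X : Type} (A : family X) :
  countable_fam A -> countable_fam (pairwise_inters A).
Proof.
  intros [Hempty | [f [Hf Hsurj]]].
  - left; intros W [U [V [HU _]]]; exact (Hempty U HU).
  - right.
    exists (fun n => inter (f (fst (Cantor.of_nat n))) (f (snd (Cantor.of_nat n)))).
    split.
    + intro n; do 2 eexists; eauto.
    + intros W [U [V [HU [HV ->]]]].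
      destruct (Hsurj U HU) as [i <-]; destruct (Hsurj V HV) as [j <-].
      exists (Cantor.to_nat (i, j)); rewrite Cantor.cancel_of_to; reflexivity.
Qed.

Lemma ctbl_sub_fam0 {X : Type} (T : family X) : ctbl_sub T fam0.
Proof. split; [intros U [] | left; intros U []]. Qed.

Lemma ctbl_sub_add {X : Type} {T P : family X} {U : set X} :
  ctbl_sub T P -> T U -> ctbl_sub T (fam_add P U).
Proof.
  intros [HPT HP] HU; split; [intros W [HW | ->]; auto | apply countable_fam_add, HP].
Qed.

Lemma ctbl_sub_pairwise_inters {X : Type} (T A : family X) :
  is_topology T -> ctbl_sub T A -> ctbl_sub T (pairwise_inters A).
Proof.
  intros [_ [_ [HTinter _]]] [HAT HA]; split.
  - intros W [U [V [HU [HV ->]]]]; apply HTinter; auto.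
  - apply countable_fam_pairwise_inters, HA.
Qed.

Lemma chain_subfam {X : Type} (A : nat -> family X) :
  (forall n, subfam (A n) (A (S n))) -> forall m n, m <= n -> subfam (A m) (A n).
Proof. intros Hincr m n Hmn; induction Hmn; intros U HU; auto; apply Hincr, IHHmn, HU. Qed.

Lemma club_covers_topology {X : Type} {T : family X} {C : family X -> Prop} :
  club T C -> forall U, T U <-> exists A, C A /\ A U.
Proof.
  intros [Hsub [_ Hcof]] U; split.
  - intros HU.
    destruct (Hcof (fam_add fam0 U)) as [A [HA HUA]].
    + exact (ctbl_sub_add (ctbl_sub_fam0 T) HU).
    + exists A; split; [exact HA | apply HUA; right; reflexivity].
  - intros [A [HA HAU]]; exact (proj1 (Hsub A HA) U HAU).
Qed.

Lemma club_separates {X : Type} {T : family X} {C : family X -> Prop} :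
  club T C -> hausdorff T ->
  forall x y : X, x <> y ->
    exists A, C A /\ exists Ux Uy, A Ux /\ A Uy /\ Ux x /\ Uy y /\
      (forall z, Ux z -> Uy z -> False).
Proof.
  intros [_ [_ Hcof]] Hhaus x y Hxy.
  destruct (Hhaus x y Hxy) as [U [V [HU [HV [Ux [Vy Hdisj]]]]]].
  destruct (Hcof (fam_add (fam_add fam0 U) V)) as [A [HA HUVA]].
  - exact (ctbl_sub_add (ctbl_sub_add (ctbl_sub_fam0 T) HU) HV).
  - exists A; split; [exact HA|].
    exists U, V; repeat split; auto; apply HUVA; [left; right | right]; reflexivity.
Qed.

Section LatticeClub.

Context {X : Type} (T : family X) (C : family X -> Prop).
Hypotheses (HT : is_topology T) (HC : club T C).

Definition lattice_members (A : family X) : Prop :=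
  C A /\ A full /\ (forall U V, A U -> A V -> A (inter U V)).

(* Junk value [fam0] when no member of the club contains [B]. *)
Definition club_hull (B : family X) : family X :=
  epsilon (inhabits fam0) (fun A => C A /\ subfam B A).

Lemma club_hull_spec (B : family X) :
  ctbl_sub T B -> C (club_hull B) /\ subfam B (club_hull B).
Proof. intros HB; unfold club_hull; apply epsilon_spec, (proj2 (proj2 HC)), HB. Qed.

Fixpoint lattice_chain (B : family X) (n : nat) : family X :=
  match n with
  | 0 => club_hull (fam_add B full)
  | S k => club_hull (pairwise_inters (lattice_chain B k))
  end.

Lemma lattice_chain_club {B : family X} :
  ctbl_sub T B -> forall n, C (lattice_chain B n).
Proof.
  intros HB n; induction n as [|n IH]; apply club_hull_spec.
  - exact (ctbl_sub_add HB (proj1 HT)).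
  - apply ctbl_sub_pairwise_inters, (proj1 HC), IH; exact HT.
Qed.

Lemma lattice_chain_inters (B : family X) (n : nat) :
  ctbl_sub T B ->
  subfam (pairwise_inters (lattice_chain B n)) (lattice_chain B (S n)).
Proof.
  intros HB; apply club_hull_spec, ctbl_sub_pairwise_inters, (proj1 HC); auto.
  exact (lattice_chain_club HB n).
Qed.

Lemma lattice_club : club T lattice_members.
Proof.
  destruct HC as [Hsub [Hchain Hcof]].
  split; [|split].
  - intros A [HA _]; exact (Hsub A HA).
  - intros As HAs Hincr; split; [apply Hchain; [apply HAs | exact Hincr]|].
    split; [exists 0; apply HAs|].
    intros U V [i Hi] [j Hj]; exists (Nat.max i j).
    destruct (HAs (Nat.max i j)) as [_ [_ Hinter]].
    apply Hinter; (eapply chain_subfam; [exact Hincr| |eauto]; lia).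
  - intros B HB.
    set (A := lattice_chain B).
    assert (Hincr : forall n, subfam (A n) (A (S n))).
    { intros n U HU; apply lattice_chain_inters; auto.
      apply subfam_pairwise_inters; exact HU. }
    assert (Hbase : subfam (fam_add B full) (A 0)).
    { apply club_hull_spec, ctbl_sub_add, (proj1 HT); exact HB. }
    exists (fun U => exists n, A n U); split; [split; [|split]|].
    + apply Hchain; [exact (lattice_chain_club HB) | exact Hincr].
    + exists 0; apply Hbase; right; reflexivity.
    + intros U V [i Hi] [j Hj]; exists (S (Nat.max i j)).
      apply lattice_chain_inters; [exact HB|].
      exists U, V; split; [|split; [|reflexivity]];
        (eapply chain_subfam; [exact Hincr| |eauto]; lia).
    + intros U HU; exists 0; apply Hbase; left; exact HU.
Qed.

End LatticeClub.

Theorem corollary2p6 (X : Type) (T : family X) :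
  is_topology T -> hausdorff T ->
  (very_I_favorable T <->
   exists C : family X -> Prop,
     club_in_bang T C /\
     (* (i) *)
     (forall A, C A ->
        (forall x, exists U, A U /\ U x) /\
        (forall U V, A U -> A V -> A (fun x => U x /\ V x))) /\
     (* (ii) *)
     (forall x y : X, x <> y ->
        exists A, C A /\ exists Ux Uy, A Ux /\ A Uy /\ Ux x /\ Uy y /\
          (forall z, Ux z -> Uy z -> False)) /\
     (* (iii) *)
     (forall U, T U <-> exists A, C A /\ A U)).
Proof.
  intros HT Hhaus; split; [|intros [C [HC _]]; exists C; exact HC].
  intros [C [HC Hbang]].
  pose proof (lattice_club T C HT HC) as Hlat.
  exists (lattice_members C); split; [split; [exact Hlat | intros P [HP _]; auto]|].
  split; [|split].
  - intros A [_ [Hfull Hinter]]; split; [|exact Hinter].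
    intros x; exists full; split; [exact Hfull | exact I].
  - exact (club_separates Hlat Hhaus).
  - exact (club_covers_topology Hlat).
Qed.
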